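(* Let $\{(\mathbf{x}^k,\mathbf{r}^k,\boldsymbol{\lambda}^k)\}$ be generated by Algorithm 2 under the bounded-delay assumption, let $k\ge0$ and $\alpha>0$. Then for any $\mathbf{x}$ independent of $i_k$ with $\mathbf{A}\mathbf{x}=\mathbf{b}$, $$\begin{aligned}&\mathbb{E}_{i_k}\Big[F(\mathbf{x}^{k+1})-F(\mathbf{x})-\langle\boldsymbol{\lambda}^{k+1},\mathbf{r}^{k+1}\rangle+(\beta-\rho)\|\mathbf{r}^{k+1}\|^2-\tfrac{\beta}{2}\|\mathbf{r}^{k+1}\|^2+\tfrac12\|\mathbf{x}^{k+1}-\mathbf{x}\|_{\mathbf{P}}^2\Big]+\tfrac12\mathbb{E}_{i_k}\|\mathbf{x}^{k+1}-\mathbf{x}^k\|^2_{\mathbf{P}-\mathbf{L}-\alpha L_c\mathbf{I}-\beta\mathbf{A}^\top\mathbf{A}}\\&-\frac{\kappa L_r\tau/\alpha+2L_r\tau}{2m}\sum_{d=k-\tau}^{k-1}\|\mathbf{x}^{d+1}-\mathbf{x}^d\|^2-\frac{1}{2m}\sum_{d=k-\tau}^{k-1}\|\mathbf{x}^{d+1}-\mathbf{x}^d\|^2_{\mathbf{L}}\\&\le\Big(1-\frac1m\Big)\Big[F(\mathbf{x}^k)-F(\mathbf{x})-\langle\boldsymbol{\lambda}^k,\mathbf{r}^k\rangle+\beta\|\mathbf{r}^k\|^2\Big]-\tfrac{\beta}{2}\|\mathbf{r}^k\|^2+\tfrac12\|\mathbf{x}^k-\mathbf{x}\|_{\mathbf{P}}^2,\end{aligned}$$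 where $\mathbf{P}=\mathrm{blkdiag}(\mathbf{P}_1,\ldots,\mathbf{P}_m)$, $L_c=\max_iL_i$, $\kappa=L_r/L_c$, $\mathbf{x}^d:=\mathbf{x}^0$ for $d<0$, and $\|\mathbf{z}\|_{\mathbf{M}}^2:=\mathbf{z}^\top\mathbf{M}\mathbf{z}$ for symmetric $\mathbf{M}$.
   Context: Problem: $\min_{\mathbf{x}} F(\mathbf{x}):=f(\mathbf{x})+g(\mathbf{x})$ s.t. $\mathbf{A}\mathbf{x}=\mathbf{b}$, where $\mathbf{x}=(\mathbf{x}_1;\ldots;\mathbf{x}_m)$ with blocks $\mathbf{x}_i\in\mathbb{R}^{n_i}$, $g(\mathbf{x})=\sum_{i=1}^m g_i(\mathbf{x}_i)$, $\mathbf{A}=[\mathbf{A}_1,\ldots,\mathbf{A}_m]$ with $\mathbf{A}_i\in\mathbb{R}^{q\times n_i}$, $\mathbf{b}\in\mathbb{R}^q$; $f$ is convex and continuously differentiable, each $g_i$ is proper, convex, lower semicontinuous. $\mathbf{U}_i\mathbf{y}$ denotes the vector whose $i$-th block is $\mathbf{y}_i$ and other blocks zero. Assumption (gradient Lipschitz continuity): there are constants $L_i>0$ and $L_r$ with $\|\nabla_i f(\mathbf{x}+\mathbf{U}_i\mathbf{y})-\nabla_i f(\mathbf{x})\|\le L_i\|\mathbf{y}_i\|$ and $\|\nabla f(\mathbf{x}+\mathbf{U}_i\mathbf{y})-\nabla f(\mathbf{x})\|\le L_r\|\mathbf{y}_i\|$ for all $i,\mathbf{x},\mathbf{y}$. $\mathbf{L}=\mathrm{blkdiag}(L_1\mathbf{I}_{n_1},\ldots,L_m\mathbf{I}_{n_m})$.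 Algorithm 2 (async-parallel randomized primal-dual block update, as analyzed): choose $\mathbf{x}^0$, $\boldsymbol{\lambda}^0=\mathbf{0}$, $\mathbf{r}^0=\mathbf{A}\mathbf{x}^0-\mathbf{b}$, $\beta>0,\rho>0$, symmetric PSD $\mathbf{P}_i$. At iteration $k$, a block index $i_k\in\{1,\ldots,m\}$ and a (possibly outdated) point $\hat{\mathbf{x}}^k$ are used; $\mathbf{x}_i^{k+1}=\mathbf{x}_i^k$ for $i\ne i_k$ and $$\mathbf{x}_{i_k}^{k+1}\in\arg\min_{\mathbf{x}_{i_k}}\big\langle\nabla_{i_k} f(\hat{\mathbf{x}}^k)-\mathbf{A}_{i_k}^\top(\boldsymbol{\lambda}^k-\beta\mathbf{r}^k),\mathbf{x}_{i_k}\big\rangle+g_{i_k}(\mathbf{x}_{i_k})+\tfrac12\|\mathbf{x}_{i_k}-\mathbf{x}_{i_k}^k\|_{\mathbf{P}_{i_k}}^2;$$ then $\mathbf{r}^{k+1}=\mathbf{r}^k+\mathbf{A}_{i_k}(\mathbf{x}_{i_k}^{k+1}-\mathbf{x}_{i_k}^k)$ and $\boldsymbol{\lambda}^{k+1}=\boldsymbol{\lambda}^k-\rho\mathbf{r}^{k+1}$. Conditionally on the history before iteration $k$ (which determines $\mathbf{x}^k,\mathbf{r}^k,\boldsymbol{\lambda}^k$ and $\hat{\mathbf{x}}^k$), $i_k$ is uniformly distributed on $\{1,\ldots,m\}$; $\mathbb{E}_{i_k}$ denotes this conditional expectation, and ''$\mathbf{x}$ independent of $i_k$'' means $\mathbf{x}$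 is determined by that history. Assumption (bounded delay): there is an integer $\tau\ge0$ such that $\hat{\mathbf{x}}^k=\mathbf{x}^k+\sum_{d\in J(k)}(\mathbf{x}^d-\mathbf{x}^{d+1})$ for some subset $J(k)\subseteq\{k-\tau,\ldots,k-1\}$. *)

From Stdlib Require Import Reals.
From mathcomp Require Import all_boot.
From Stdlib Require Import Reals.


Open Scope R_scope.

Inductive ereal := EFin (r : R) | EInf.

Definition ele (a b : ereal) : Prop :=
  match a, b with
  | _, EInf => True
  | EInf, EFin _ => False
  | EFin x, EFin y => x <= y
  end.

Definition elt (a : R) (e : ereal) : Prop :=
  match e with EFin y => a < y | EInf => True end.

Definition eplus (a b : ereal) : ereal :=
  match a, b with EFin x, EFin y => EFin (x + y) | _, _ => EInf end.

(* real value of a finite extended real (only used on finite values) *)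
Definition efin_val (e : ereal) : R := match e with EFin x => x | EInf => 0 end.

Definition vsum {U : finType} (F : U -> R) : R := \big[Rplus/0]_(j : U) F j.
Definition ip {U : finType} (x y : U -> R) : R := vsum (fun j => x j * y j).
Definition vnorm {U : finType} (x : U -> R) : R := sqrt (ip x x).
Definition vadd {U : finType} (x y : U -> R) : U -> R := fun j => x j + y j.
Definition vsub {U : finType} (x y : U -> R) : U -> R := fun j => x j - y j.
Definition vscale {U : finType} (t : R) (x : U -> R) : U -> R := fun j => t * x j.

Definition qform {U : finType} (M : U -> U -> R) (z : U -> R) : R :=
  vsum (fun j => vsum (fun j' => z j * M j j' * z j')).

Definition convex_fun {U : finType} (f : (U -> R) -> R) : Prop :=
  forall (x y : U -> R) (t : R), 0 <= t <= 1 ->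
    f (vadd (vscale t x) (vscale (1 - t) y)) <= t * f x + (1 - t) * f y.

Definition is_gradient {U : finType} (f : (U -> R) -> R) (gradf : (U -> R) -> U -> R) : Prop :=
  forall x eps, 0 < eps -> exists delta, 0 < delta /\
    forall y, vnorm (vsub y x) < delta ->
      Rabs (f y - f x - ip (gradf x) (vsub y x)) <= eps * vnorm (vsub y x).

Definition continuous_map {U V : finType} (h : (U -> R) -> V -> R) : Prop :=
  forall x eps, 0 < eps -> exists delta, 0 < delta /\
    forall y, vnorm (vsub y x) < delta -> vnorm (vsub (h y) (h x)) < eps.

Definition convex_efun {U : finType} (g : (U -> R) -> ereal) : Prop :=
  forall (x y : U -> R) (t a c : R), 0 <= t <= 1 -> g x = EFin a -> g y = EFin c ->
    ele (g (vadd (vscale t x) (vscale (1 - t) y))) (EFin (t * a + (1 - t) * c)).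

Definition proper_efun {U : finType} (g : (U -> R) -> ereal) : Prop :=
  exists x, g x <> EInf.

Definition lsc_efun {U : finType} (g : (U -> R) -> ereal) : Prop :=
  forall x a, elt a (g x) -> exists delta, 0 < delta /\
    forall y, vnorm (vsub y x) < delta -> elt a (g y).

Definition Blk {T : finType} {m : nat} (blk : T -> 'I_m) (i : 'I_m) : finType :=
  {j : T | blk j == i}.

Definition restr {T : finType} {m : nat} (blk : T -> 'I_m) (i : 'I_m) (x : T -> R)
  : Blk blk i -> R := fun s => x (proj1_sig s).

Definition bsum {T : finType} {m : nat} (blk : T -> 'I_m) (i : 'I_m) (F : T -> R) : R :=
  \big[Rplus/0]_(j : T | blk j == i) F j.

Definition bnorm {T : finType} {m : nat} (blk : T -> 'I_m) (i : 'I_m) (y : T -> R) : R :=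
  sqrt (bsum blk i (fun j => y j ^ 2)).

Definition Uop {T : finType} {m : nat} (blk : T -> 'I_m) (i : 'I_m) (y : T -> R) : T -> R :=
  fun j => if blk j == i then y j else 0.

Definition Amul {T : finType} {q : nat} (A : 'I_q -> T -> R) (z : T -> R) : 'I_q -> R :=
  fun r => vsum (fun j => A r j * z j).

Definition Pfull {T : finType} {m : nat} (blk : T -> 'I_m) (Pb : 'I_m -> T -> T -> R)
  : T -> T -> R := fun j j' => if blk j == blk j' then Pb (blk j) j j' else 0.
Definition Lmat {T : finType} {m : nat} (blk : T -> 'I_m) (Lb : 'I_m -> R)
  : T -> T -> R := fun j j' => if j == j' then Lb (blk j) else 0.
Definition Imat {T : finType} : T -> T -> R := fun j j' => if j == j' then 1 else 0.
Definition AtA {T : finType} {q : nat} (A : 'I_q -> T -> R) : T -> T -> R :=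
  fun j j' => vsum (fun r => A r j * A r j').

Definition Lc {m : nat} (Lb : 'I_m -> R) : R := \big[Rmax/0]_(i < m) Lb i.

(* F(x) = f(x) + sum_i g_i(x_i) (real value; used only on dom F) *)
Definition Fval {T : finType} {m : nat} (blk : T -> 'I_m) (f : (T -> R) -> R)
  (g : forall i : 'I_m, (Blk blk i -> R) -> ereal) (x : T -> R) : R :=
  f x + \big[Rplus/0]_(i < m) efin_val (g i (restr blk i x)).

Definition block_obj {T : finType} {m q : nat} (blk : T -> 'I_m) (gradf : (T -> R) -> T -> R)
  (g : forall i : 'I_m, (Blk blk i -> R) -> ereal) (A : 'I_q -> T -> R)
  (Pb : 'I_m -> T -> T -> R) (beta : R) (i : 'I_m)
  (xk xhat : T -> R) (lam r : 'I_q -> R) (w : Blk blk i -> R) : ereal :=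
  let c := fun s : Blk blk i =>
     gradf xhat (proj1_sig s) - vsum (fun l => A l (proj1_sig s) * (lam l - beta * r l)) in
  let z := fun s : Blk blk i => w s - xk (proj1_sig s) in
  eplus (EFin (ip c w + / 2 * qform (fun s s' : Blk blk i => Pb i (proj1_sig s) (proj1_sig s')) z))
        (g i w).

Definition x_step {T : finType} {m q : nat} (blk : T -> 'I_m) (gradf : (T -> R) -> T -> R)
  (g : forall i : 'I_m, (Blk blk i -> R) -> ereal) (A : 'I_q -> T -> R)
  (Pb : 'I_m -> T -> T -> R) (beta : R) (i : 'I_m)
  (xk xhat : T -> R) (lam r : 'I_q -> R) (xk1 : T -> R) : Prop :=
  (forall j, blk j != i -> xk1 j = xk j) /\
  (forall w, ele (block_obj blk gradf g A Pb beta i xk xhat lam r (restr blk i xk1))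
                 (block_obj blk gradf g A Pb beta i xk xhat lam r w)).

Definition r_next {T : finType} {m q : nat} (blk : T -> 'I_m) (A : 'I_q -> T -> R)
  (i : 'I_m) (xk xk1 : T -> R) (rk : 'I_q -> R) : 'I_q -> R :=
  fun l => rk l + bsum blk i (fun j => A l j * (xk1 j - xk j)).

Definition lam_next {q : nat} (rho : R) (lamk rk1 : 'I_q -> R) : 'I_q -> R :=
  fun l => lamk l - rho * rk1 l.

(* bounded delay: xhat^d = x^d + sum_{e in J(d)} (x^e - x^{e+1}), J(d) in {d-tau,...,d-1};
   indices e < 0 contribute 0 since x^e := x^0 for e < 0 *)
Definition bounded_delay {T : finType} (tau : nat) (xs : nat -> T -> R) (xhat : T -> R)
  (d : nat) : Prop :=
  exists J : pred nat, forall j,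
    xhat j = xs d j + \big[Rplus/0]_(d - tau <= e < d | J e) (xs e j - xs e.+1 j).

(* For each value i of i_k, the update of block i is a proximal step; its
   optimality condition, the block descent lemma for f and the dual update bound
   the i-th outcome by the right-hand side plus a remainder living on block i.
   Averaging over i, these remainders add up to whole-space quantities which,
   by convexity of f and A x = b, give -(F(x^k) - F(x) - <lambda^k, r^k>
   + beta ||r^k||^2) up to the error of using the stale gradient at xhat^k
   (split off with Young's inequality, weight alpha L_c).  Since x^k - xhat^k is
   a sum of at most tau block updates from the last tau iterations, chaining the
   Lipschitz bounds along them controls that error by the last tau steps. *)

From HB Require Import structures.
From Stdlib Require Import Reals Lra Psatz FunctionalExtensionality.
From mathcomp Require Import all_boot.
From Stdlib Require Import Reals.
Open Scope R_scope.

Lemma Rplus_associative : associative Rplus.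
Proof. by move=> *; rewrite Rplus_assoc. Qed.

HB.instance Definition _ :=
  Monoid.isComLaw.Build R 0 Rplus Rplus_associative Rplus_comm Rplus_0_l.

Section RealSums.
Variables (I : Type) (r : seq I) (P : pred I).

Lemma bigR_scal (c : R) (F : I -> R) :
  \big[Rplus/0]_(j <- r | P j) (c * F j) = c * \big[Rplus/0]_(j <- r | P j) F j.
Proof.
rewrite (big_endo (fun x => c * x)) //; last by rewrite Rmult_0_r.
by move=> x y; rewrite Rmult_plus_distr_l.
Qed.

Lemma bigR_opp (F : I -> R) :
  \big[Rplus/0]_(j <- r | P j) (- F j) = - \big[Rplus/0]_(j <- r | P j) F j.
Proof.
rewrite (eq_bigr (fun j => (-1) * F j)) => [|j _]; last ring.
rewrite bigR_scal; ring.
Qed.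

Lemma bigR_sub (F G : I -> R) :
  \big[Rplus/0]_(j <- r | P j) (F j - G j) =
  \big[Rplus/0]_(j <- r | P j) F j - \big[Rplus/0]_(j <- r | P j) G j.
Proof. by rewrite big_split bigR_opp. Qed.

Lemma bigR_le (F G : I -> R) :
  (forall j, P j -> F j <= G j) ->
  \big[Rplus/0]_(j <- r | P j) F j <= \big[Rplus/0]_(j <- r | P j) G j.
Proof.
move=> H; apply: (big_ind2 (fun x y => x <= y)) => //; first lra.
by move=> *; lra.
Qed.

Lemma bigR_ge0 (F : I -> R) :
  (forall j, P j -> 0 <= F j) -> 0 <= \big[Rplus/0]_(j <- r | P j) F j.
Proof.
move=> H; apply: (big_ind (fun x => 0 <= x)) => //; first lra.
by move=> *; lra.
Qed.

End RealSums.

Lemma bigR_filter_le (I : Type) (r : seq I) (P : pred I) (F : I -> R) :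
  (forall j, 0 <= F j) ->
  \big[Rplus/0]_(j <- r | P j) F j <= \big[Rplus/0]_(j <- r) F j.
Proof.
move=> H; rewrite big_mkcond; apply: bigR_le => j _.
by case: (P j); [apply: Rle_refl | apply: H].
Qed.

Lemma bigR_const_ord (n : nat) (c : R) : \big[Rplus/0]_(i < n) c = INR n * c.
Proof.
rewrite big_const_ord; elim: n => [|n IH]; first by rewrite /=; lra.
by rewrite S_INR /= IH; lra.
Qed.

Lemma bigR_sqr_le_size (I : Type) (s : seq I) (a : I -> R) :
  (\big[Rplus/0]_(e <- s) a e) ^ 2 <= INR (size s) * \big[Rplus/0]_(e <- s) a e ^ 2.
Proof.
elim: s => [|e s IH]; first by rewrite !big_nil /=; lra.
rewrite !big_cons (_ : INR (size (e :: s)) = INR (size s) + 1); last by rewrite -S_INR.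
set N := \big[Rplus/0]_(e0 <- s) a e0 in IH *.
set S := \big[Rplus/0]_(e0 <- s) a e0 ^ 2 in IH *.
have Hn : 0 <= INR (size s) := pos_INR _.
suff : 2 * a e * N <= INR (size s) * a e ^ 2 + S by nra.
have [Hn0|Hn0] := Req_dec (INR (size s)) 0.
  have HS : 0 <= S by apply: bigR_ge0 => *; apply: pow2_ge_0.
  rewrite Hn0 in IH *; have -> : N = 0 by nra.
  lra.
apply: (Rmult_le_reg_l (INR (size s))); first lra.
have := pow2_ge_0 (INR (size s) * a e - N); nra.
Qed.

Lemma le_of_le_add_small (a b c : R) :
  (forall t, 0 < t <= 1 -> a <= b + t * c) -> a <= b.
Proof.
move=> H; apply: Rle_plus_epsilon => eps Heps.
set t := Rmin 1 (eps / (Rabs c + 1)).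
have Hc := Rabs_pos c; have Hcc := Rle_abs c.
have Ht0 : 0 < t by apply: Rmin_pos; [lra | apply: Rdiv_lt_0_compat; lra].
have Ht : t * (Rabs c + 1) <= eps.
  have := Rmin_r 1 (eps / (Rabs c + 1)); rewrite -/t => Ht.
  have := Rmult_le_compat_r (Rabs c + 1) _ _ ltac:(lra) Ht.
  by rewrite /Rdiv Rmult_assoc Rinv_l; lra.
have := H t (conj Ht0 (Rmin_l _ _)); nra.
Qed.

Lemma young (a b c : R) : 0 < c -> a * b <= c / 2 * a ^ 2 + / (2 * c) * b ^ 2.
Proof.
move=> Hc; have H : 0 <= (c * a - b) ^ 2 := pow2_ge_0 _.
apply: (Rmult_le_reg_l (2 * c)); first lra.
have -> : 2 * c * (c / 2 * a ^ 2 + / (2 * c) * b ^ 2) = (c * a) ^ 2 + b ^ 2 by field; lra.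
nra.
Qed.

Section Vectors.
Context {U : finType}.
Implicit Types (F G : U -> R) (a b c u v : U -> R).

Lemma vsum_ext F G : (forall j, F j = G j) -> vsum F = vsum G.
Proof. by move=> H; apply: eq_bigr => j _. Qed.

Lemma vsum_add F G : vsum (fun j => F j + G j) = vsum F + vsum G.
Proof. exact: big_split. Qed.

Lemma vsum_sub F G : vsum (fun j => F j - G j) = vsum F - vsum G.
Proof. exact: bigR_sub. Qed.

Lemma vsum_scal (k : R) F : vsum (fun j => k * F j) = k * vsum F.
Proof. exact: bigR_scal. Qed.

Lemma vsum_ge0 F : (forall j, 0 <= F j) -> 0 <= vsum F.
Proof. by move=> H; apply: bigR_ge0. Qed.

Lemma vsum_exchange (V : finType) (H : U -> V -> R) :
  vsum (fun j => vsum (fun j' => H j j')) = vsum (fun j' => vsum (fun j => H j j')).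
Proof. exact: exchange_big. Qed.

Lemma ip_ext a a' b b' :
  (forall j, a j = a' j) -> (forall j, b j = b' j) -> ip a b = ip a' b'.
Proof. by move=> Ha Hb; apply: vsum_ext => j; rewrite Ha Hb. Qed.

Lemma ip_sym a b : ip a b = ip b a.
Proof. by apply: vsum_ext => j; ring. Qed.

Lemma ip_ge0 a : 0 <= ip a a.
Proof. by apply: vsum_ge0 => j; nra. Qed.

Lemma ip_scalr (k : R) a b : ip a (fun j => k * b j) = k * ip a b.
Proof. by rewrite /ip -vsum_scal; apply: vsum_ext => j; ring. Qed.

Lemma ip_subl a b c : ip (vsub a b) c = ip a c - ip b c.
Proof. by rewrite /ip -vsum_sub; apply: vsum_ext => j; rewrite /vsub; ring. Qed.

Lemma ip_addr a b c : ip a (fun j => b j + c j) = ip a b + ip a c.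
Proof. by rewrite /ip -vsum_add; apply: vsum_ext => j; ring. Qed.

Lemma ip_sqr_add a b :
  ip (fun j => a j + b j) (fun j => a j + b j) = ip a a + 2 * ip a b + ip b b.
Proof. by rewrite /ip -vsum_scal -!vsum_add; apply: vsum_ext => j; ring. Qed.

Lemma vnorm_ext a b : (forall j, a j = b j) -> vnorm a = vnorm b.
Proof. by move=> H; rewrite /vnorm (ip_ext _ _ _ _ H H). Qed.

Lemma vnorm_ge0 a : 0 <= vnorm a.
Proof. exact: sqrt_pos. Qed.

Lemma vnorm_sqr a : vnorm a ^ 2 = ip a a.
Proof. by rewrite /vnorm /= Rmult_1_r sqrt_sqrt //; apply: ip_ge0. Qed.

Lemma vnorm_scale (k : R) a : vnorm (vscale k a) = Rabs k * vnorm a.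
Proof.
rewrite /vnorm (_ : ip _ _ = (k * k) * ip a a).
  by rewrite sqrt_mult; [rewrite -sqrt_Rsqr_abs | nra | apply: ip_ge0].
by rewrite /ip -vsum_scal; apply: vsum_ext => j; rewrite /vscale; ring.
Qed.

Lemma vnorm_eq0 a : ip a a = 0 -> vnorm a = 0.
Proof. by rewrite /vnorm => ->; apply: sqrt_0. Qed.

Lemma ip_sqr_sub_ge0 (t : R) a b : 2 * t * ip a b <= t ^ 2 * ip a a + ip b b.
Proof.
have := ip_ge0 (fun j => t * a j - b j).
suff -> : ip (fun j => t * a j - b j) (fun j => t * a j - b j) =
          t ^ 2 * ip a a - 2 * t * ip a b + ip b b by lra.
by rewrite /ip -!vsum_scal -vsum_sub -vsum_add; apply: vsum_ext => j; ring.
Qed.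

Lemma ip_le0_of_null a b : ip a a = 0 -> ip a b <= 0.
Proof.
move=> Ha; apply: Rnot_lt_le => Hab.
have := ip_sqr_sub_ge0 ((ip b b + 1) / (2 * ip a b)) a b.
rewrite Ha; have := ip_ge0 b.
have -> : 2 * ((ip b b + 1) / (2 * ip a b)) * ip a b = ip b b + 1 by field; lra.
lra.
Qed.

Lemma cauchy_schwarz a b : ip a b <= vnorm a * vnorm b.
Proof.
have Ha := vnorm_ge0 a; have Hb := vnorm_ge0 b.
have [Ha0|Ha0] := Req_dec (vnorm a) 0.
  rewrite Ha0 Rmult_0_l; apply: ip_le0_of_null.
  by rewrite -vnorm_sqr Ha0; ring.
have [Hb0|Hb0] := Req_dec (vnorm b) 0.
  rewrite Hb0 Rmult_0_r ip_sym; apply: ip_le0_of_null.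
  by rewrite -vnorm_sqr Hb0; ring.
have := ip_sqr_sub_ge0 (vnorm b / vnorm a) a b.
rewrite -!vnorm_sqr.
have -> : (vnorm b / vnorm a) ^ 2 * vnorm a ^ 2 = vnorm b ^ 2 by field.
move=> H; apply: (Rmult_le_reg_l (2 * (vnorm b / vnorm a))).
  by apply: Rmult_lt_0_compat; [lra | apply: Rdiv_lt_0_compat; lra].
have -> : 2 * (vnorm b / vnorm a) * (vnorm a * vnorm b) = vnorm b ^ 2 + vnorm b ^ 2 by field.
lra.
Qed.

Lemma vnorm_triangle a b : vnorm (fun j => a j + b j) <= vnorm a + vnorm b.
Proof.
have Ha := vnorm_ge0 a; have Hb := vnorm_ge0 b.
apply: Rsqr_incr_0_var; last lra.
rewrite !Rsqr_pow2 vnorm_sqr ip_sqr_add -!vnorm_sqr; have := cauchy_schwarz a b; nra.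
Qed.

Definition bil (M : U -> U -> R) u v : R :=
  vsum (fun j => vsum (fun j' => u j * M j j' * v j')).

Lemma bil_sym (M : U -> U -> R) u v :
  (forall j j', M j j' = M j' j) -> bil M v u = bil M u v.
Proof.
move=> HM; rewrite /bil vsum_exchange; apply: vsum_ext => j; apply: vsum_ext => j'.
by rewrite HM; ring.
Qed.

Lemma bil_addr (M : U -> U -> R) u v w :
  bil M u (fun j => v j + w j) = bil M u v + bil M u w.
Proof.
rewrite /bil -vsum_add; apply: vsum_ext => j.
by rewrite -vsum_add; apply: vsum_ext => j'; ring.
Qed.

Lemma bil_scalr (M : U -> U -> R) (k : R) u v :
  bil M u (fun j => k * v j) = k * bil M u v.
Proof.
rewrite /bil -vsum_scal; apply: vsum_ext => j.
by rewrite -vsum_scal; apply: vsum_ext => j'; ring.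
Qed.

Lemma qform_ext (M : U -> U -> R) u v : (forall j, u j = v j) -> qform M u = qform M v.
Proof. by move=> H; apply: vsum_ext => j; apply: vsum_ext => j'; rewrite !H. Qed.

Lemma qform_add (M : U -> U -> R) u v :
  qform M (fun j => u j + v j) = qform M u + (bil M u v + bil M v u) + qform M v.
Proof.
rewrite /qform /bil -!vsum_add; apply: vsum_ext => j.
by rewrite -!vsum_add; apply: vsum_ext => j'; ring.
Qed.

End Vectors.

Section Calculus.
Context {U : finType}.
Variables (f : (U -> R) -> R) (gradf : (U -> R) -> U -> R).
Hypothesis f_grad : is_gradient f gradf.

Lemma line_shift (y u : U -> R) (t h : R) :
  vsub (vadd y (vscale (t + h) u)) (vadd y (vscale t u)) = vscale h u.
Proof. by apply: functional_extensionality => j; rewrite /vsub /vadd /vscale; ring. Qed.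

Lemma derivable_line (y u : U -> R) (t : R) :
  derivable_pt_lim (fun s => f (vadd y (vscale s u))) t
    (ip (gradf (vadd y (vscale t u))) u).
Proof.
move=> eps Heps; set p := vadd y (vscale t u); set N := vnorm u.
have HN : 0 <= N := vnorm_ge0 u.
have Htol : 0 < eps / (2 * (N + 1)) by apply: Rdiv_lt_0_compat; lra.
have [delta [Hd Hdel]] := f_grad p _ Htol.
have Hd' : 0 < delta / (N + 1) by apply: Rdiv_lt_0_compat; lra.
exists (mkposreal _ Hd') => h Hh0 /= Hh.
have Habs : 0 < Rabs h := Rabs_pos_lt _ Hh0.
have Hsmall : Rabs h * N < delta.
  have := Rmult_lt_compat_r (N + 1) _ _ ltac:(lra) Hh.
  rewrite /Rdiv Rmult_assoc Rinv_l; nra.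
have := Hdel (vadd y (vscale (t + h) u)).
rewrite /p line_shift vnorm_scale -/N => /(_ Hsmall).
rewrite -/p (ip_scalr h (gradf p) u : ip _ (vscale h u) = _).
set X := f _ - f p - _ => HX.
have -> : (f (vadd y (vscale (t + h) u)) - f p) / h - ip (gradf p) u = X / h.
  by rewrite /X; field.
rewrite /Rdiv Rabs_mult Rabs_inv.
apply: (Rmult_lt_reg_r (Rabs h)) => //; rewrite Rmult_assoc Rinv_l; last lra.
rewrite Rmult_1_r.
have : eps / (2 * (N + 1)) * (Rabs h * N) < eps * Rabs h.
  apply: (Rmult_lt_reg_r (2 * (N + 1))); first lra.
  have -> : eps / (2 * (N + 1)) * (Rabs h * N) * (2 * (N + 1)) = eps * Rabs h * N by field; lra.
  have : 0 < eps * Rabs h := Rmult_lt_0_compat _ _ Heps Habs.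
  nra.
lra.
Qed.

Lemma vadd_vscale0 (y u : U -> R) : vadd y (vscale 0 u) = y.
Proof. by apply: functional_extensionality => j; rewrite /vadd /vscale; ring. Qed.

Lemma vadd_vscale1 (y u : U -> R) : vadd y (vscale 1 u) = vadd y u.
Proof. by apply: functional_extensionality => j; rewrite /vadd /vscale; ring. Qed.

(* The difference quotients of the convex line [s |-> f (x + s (y - x))] on
   [(0, 1]] are bounded by [f y - f x]; their limit at [0] is the slope. *)
Lemma convex_gradient_le (x y : U -> R) :
  convex_fun f -> f x + ip (gradf x) (vsub y x) <= f y.
Proof.
move=> f_conv; set u := vsub y x.
suff : ip (gradf x) u <= f y - f x by lra.
apply: Rle_plus_epsilon => eps Heps.
have [delta Hdelta] := derivable_line x u 0 eps Heps.
rewrite vadd_vscale0 in Hdelta.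
set h := Rmin 1 (delta / 2).
have Hd := cond_pos delta.
have Hh0 : 0 < h by apply: Rmin_pos; lra.
have Hh1 : h <= 1 := Rmin_l _ _.
have Hhd : h < delta by have := Rmin_r 1 (delta / 2); rewrite -/h; lra.
have := Hdelta h (Rgt_not_eq _ _ Hh0) ltac:(rewrite Rabs_pos_eq; lra).
rewrite Rplus_0_l => /Rabs_def2 [_ Hq].
have Hconv := f_conv y x h (conj (Rlt_le _ _ Hh0) Hh1).
rewrite (_ : vadd (vscale h y) (vscale (1 - h) x) = vadd x (vscale h u)) in Hconv; last first.
  by apply: functional_extensionality => j; rewrite /vadd /vscale /u /vsub; ring.
have : (f (vadd x (vscale h u)) - f x) / h <= f y - f x.
  apply: (Rmult_le_reg_r h) => //.
  rewrite /Rdiv Rmult_assoc Rinv_l; lra.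
lra.
Qed.

Lemma descent_along (y u : U -> R) (L : R) :
  (forall s, 0 <= s <= 1 ->
     ip (vsub (gradf (vadd y (vscale s u))) (gradf y)) u <= L * s * ip u u) ->
  f (vadd y u) <= f y + ip (gradf y) u + L / 2 * ip u u.
Proof.
move=> Hslope.
set phi := fun s => f (vadd y (vscale s u)).
set psi := fun s => ip (gradf y) u * s + L / 2 * ip u u * Rsqr s.
have Hpsi c : derivable_pt_lim psi c (ip (gradf y) u * 1 + L / 2 * ip u u * (2 * c)).
  exact: (derivable_pt_lim_plus _ _ _ _ _
    (derivable_pt_lim_scal _ _ _ _ (derivable_pt_lim_id c))
    (derivable_pt_lim_scal _ _ _ _ (derivable_pt_lim_Rsqr c))).
have [c [Hc Hc01]] := MVT_cor2 (fun s => phi s - psi s) _ 0 1 Rlt_0_1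
  (fun c _ => derivable_pt_lim_minus _ _ _ _ _ (derivable_line y u c) (Hpsi c)).
have := Hslope c ltac:(lra).
move: Hc; rewrite /phi /psi vadd_vscale0 vadd_vscale1 ip_subl /Rsqr.
nra.
Qed.

End Calculus.

(* Compare [z] with the points [z + t (w - z)] and let [t -> 0]. *)
Lemma prox_step_optimality {U : finType} (c : U -> R) (M : U -> U -> R)
    (h : (U -> R) -> ereal) (x0 z w : U -> R) (hw : R) :
  (forall s s', M s s' = M s' s) -> convex_efun h -> h w = EFin hw ->
  (forall v, ele (eplus (EFin (ip c z + / 2 * qform M (fun s => z s - x0 s))) (h z))
                 (eplus (EFin (ip c v + / 2 * qform M (fun s => v s - x0 s))) (h v))) ->
  exists hz, h z = EFin hz /\
    hz - hw <= ip c (vsub w z) + bil M (fun s => z s - x0 s) (vsub w z).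
Proof.
move=> Msym h_conv Hw Hmin.
have := Hmin w; rewrite Hw; case Hz: (h z) => [hz|] //= _.
exists hz; split => //.
set d := vsub w z; set u := fun s => z s - x0 s.
apply: (le_of_le_add_small _ _ (/ 2 * qform M d)) => t Ht.
have := h_conv w z t hw hz ltac:(lra) Hw Hz.
set v := vadd (vscale t w) (vscale (1 - t) z).
case Hv: (h v) => [hv|] //= Hhv.
have := Hmin v; rewrite Hz Hv /=.
have -> : ip c v = ip c z + t * ip c d.
  by rewrite -ip_scalr -ip_addr; apply: vsum_ext => j; rewrite /v /d /vadd /vscale /vsub; ring.
have -> : qform M (fun s => v s - x0 s) = qform M (fun s => u s + t * d s).
  by apply: qform_ext => j; rewrite /v /u /d /vadd /vscale /vsub; ring.
have Hdu : bil M (fun s => t * d s) u = t * bil M u d by rewrite bil_sym // bil_scalr.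
have Hdd : qform M (fun s => t * d s) = t ^ 2 * qform M d.
  by rewrite [LHS]bil_scalr bil_sym // bil_scalr; change (qform M d) with (bil M d d); ring.
rewrite qform_add bil_scalr Hdu Hdd -/u => Hopt.
apply: (Rmult_le_reg_l t); first lra.
nra.
Qed.

Section Blocks.
Context {T : finType} {m : nat} (blk : T -> 'I_m).

Definition block_supported (i : 'I_m) (u : T -> R) : Prop :=
  forall j, blk j != i -> u j = 0.

Lemma bsum_ext (i : 'I_m) (F G : T -> R) :
  (forall j, blk j = i -> F j = G j) -> bsum blk i F = bsum blk i G.
Proof. by move=> H; apply: eq_bigr => j /eqP; apply: H. Qed.

Lemma sum_Blk (i : 'I_m) (F : T -> R) :
  \big[Rplus/0]_(s : Blk blk i) F (proj1_sig s) = bsum blk i F.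
Proof.
rewrite /bsum (reindex_omap (val : Blk blk i -> T) insub) => [|j Hj]; last by rewrite insubT.
by apply: eq_bigl => -[j Hj] /=; rewrite insubT ?Hj /= eqxx.
Qed.

Lemma sum_bsum (F : T -> R) : \big[Rplus/0]_(i < m) bsum blk i F = vsum F.
Proof. by rewrite /vsum (partition_big blk xpredT). Qed.

Lemma vsum_supported (i : 'I_m) (F : T -> R) : block_supported i F -> vsum F = bsum blk i F.
Proof. by move=> HF; rewrite /bsum big_mkcond; apply: vsum_ext => j; case: ifPn => // /HF. Qed.

Lemma ip_Uop (i : 'I_m) (a b : T -> R) : ip (Uop blk i a) b = bsum blk i (fun j => a j * b j).
Proof. by rewrite /bsum big_mkcond; apply: vsum_ext => j; rewrite /Uop; case: ifP => _; ring. Qed.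

Lemma sum_ip_Uop (a b : T -> R) : \big[Rplus/0]_(i < m) ip (Uop blk i a) b = ip a b.
Proof. by rewrite (eq_bigr _ (fun i _ => ip_Uop i a b)) sum_bsum. Qed.

Lemma ip_restr (i : 'I_m) (a b : T -> R) :
  ip (restr blk i a) (restr blk i b) = ip (Uop blk i a) b.
Proof. by rewrite ip_Uop -sum_Blk. Qed.

Lemma Uop_supported (i : 'I_m) (u : T -> R) : block_supported i u -> Uop blk i u = u.
Proof.
move=> Hu; apply: functional_extensionality => j; rewrite /Uop.
by case: ifPn => // /Hu ->.
Qed.

Lemma ip_Uop_supported (i : 'I_m) (a u : T -> R) :
  block_supported i u -> ip (Uop blk i a) u = ip a u.
Proof.
by move=> Hu; apply: vsum_ext => j; rewrite /Uop; case: ifPn => // /Hu ->; ring.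
Qed.

Lemma bnorm_Uop (i : 'I_m) (v : T -> R) : bnorm blk i v = vnorm (Uop blk i v).
Proof.
rewrite /bnorm /vnorm ip_Uop; congr sqrt; apply: bsum_ext => j Hj.
by rewrite /Uop Hj eqxx; ring.
Qed.

Lemma ip_supported_young (i : 'I_m) (c : R) (a D : T -> R) :
  0 < c -> block_supported i D ->
  ip a D <= c / 2 * ip D D + / (2 * c) * ip (Uop blk i a) a.
Proof.
move=> Hc HD; rewrite -(ip_Uop_supported i a _ HD) ip_sym.
have -> : ip (Uop blk i a) a = ip (Uop blk i a) (Uop blk i a).
  by apply: vsum_ext => j; rewrite /Uop; case: ifP => _; ring.
rewrite -!vnorm_sqr; have := cauchy_schwarz D (Uop blk i a).
have := young (vnorm D) (vnorm (Uop blk i a)) c Hc; lra.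
Qed.

End Blocks.

Lemma qform_sub_mat {U : finType} (M1 M2 : U -> U -> R) (u : U -> R) :
  qform (fun j j' => M1 j j' - M2 j j') u = qform M1 u - qform M2 u.
Proof.
rewrite /qform -vsum_sub; apply: vsum_ext => j.
by rewrite -vsum_sub; apply: vsum_ext => j'; ring.
Qed.

Lemma qform_scale_mat {U : finType} (c : R) (M : U -> U -> R) (u : U -> R) :
  qform (fun j j' => c * M j j') u = c * qform M u.
Proof.
rewrite /qform -vsum_scal; apply: vsum_ext => j.
by rewrite -vsum_scal; apply: vsum_ext => j'; ring.
Qed.

Lemma qform_diag {U : finType} (d : U -> R) (u : U -> R) :
  qform (fun j j' => if j == j' then d j else 0) u = vsum (fun j => d j * u j ^ 2).
Proof.
apply: vsum_ext => j; rewrite /vsum (bigD1 j) //= eqxx big1 => [|j' Hj']; first ring.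
by rewrite eq_sym (negbTE Hj'); ring.
Qed.

Lemma qform_Imat {U : finType} (u : U -> R) : qform Imat u = ip u u.
Proof. by rewrite qform_diag; apply: vsum_ext => j; ring. Qed.

Lemma vsum_mul {U V : finType} (F : U -> R) (G : V -> R) :
  vsum F * vsum G = vsum (fun j => vsum (fun j' => F j * G j')).
Proof.
rewrite Rmult_comm -(vsum_scal (vsum G) F); apply: vsum_ext => j.
by rewrite Rmult_comm -(vsum_scal (F j) G).
Qed.

Lemma qform_AtA {U : finType} {q : nat} (A : 'I_q -> U -> R) (u : U -> R) :
  qform (AtA A) u = ip (Amul A u) (Amul A u).
Proof.
rewrite /ip /Amul (vsum_ext _ (fun l => vsum (fun j => vsum (fun j' =>
  A l j * u j * (A l j' * u j'))))) => [|l]; last exact: vsum_mul.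
rewrite vsum_exchange; apply: vsum_ext => j; rewrite vsum_exchange; apply: vsum_ext => j'.
rewrite (vsum_ext (fun l => A l j * u j * (A l j' * u j'))
                  (fun l => (u j * u j') * (A l j * A l j'))) => [|l]; last ring.
by rewrite vsum_scal /AtA; ring.
Qed.

Section BlockMatrices.
Context {T : finType} {m : nat} (blk : T -> 'I_m).

Lemma Pfull_sym (Pb : 'I_m -> T -> T -> R) :
  (forall i j j', blk j = i -> blk j' = i -> Pb i j j' = Pb i j' j) ->
  forall j j', Pfull blk Pb j j' = Pfull blk Pb j' j.
Proof. by move=> HP j j'; rewrite /Pfull eq_sym; case: eqP => // E; rewrite E; apply: HP. Qed.

Lemma bil_Pfull_supported (Pb : 'I_m -> T -> T -> R) (i : 'I_m) (D v : T -> R) :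
  block_supported blk i D ->
  bil (Pfull blk Pb) D v =
  bil (fun s s' : Blk blk i => Pb i (proj1_sig s) (proj1_sig s')) (restr blk i D) (restr blk i v).
Proof.
move=> HD; transitivity (bsum blk i (fun j => bsum blk i (fun j' => D j * Pb i j j' * v j'))).
  rewrite /bil (vsum_supported blk i) => [|j /HD ->]; last by rewrite /vsum big1 // => *; ring.
  apply: bsum_ext => j Hj; rewrite /bsum big_mkcond; apply: eq_bigr => j' _.
  by rewrite /Pfull Hj eq_sym; case: eqP => _; ring.
rewrite /bil /vsum -sum_Blk; apply: eq_bigr => s _.
by rewrite -(sum_Blk blk i (fun j' => D (proj1_sig s) * Pb i (proj1_sig s) j' * v j')).
Qed.

Lemma qform_Lmat (Lb : 'I_m -> R) (u : T -> R) :
  qform (Lmat blk Lb) u = vsum (fun j => Lb (blk j) * u j ^ 2).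
Proof. exact: qform_diag. Qed.

Lemma qform_Lmat_supported (Lb : 'I_m -> R) (i : 'I_m) (u : T -> R) :
  block_supported blk i u -> qform (Lmat blk Lb) u = Lb i * ip u u.
Proof.
move=> Hu; rewrite qform_Lmat /ip -vsum_scal; apply: vsum_ext => j.
by case: (eqVneq (blk j) i) => [->|/Hu ->]; ring.
Qed.

Lemma qform_Lmat_ge0 (Lb : 'I_m -> R) (u : T -> R) :
  (forall i, 0 <= Lb i) -> 0 <= qform (Lmat blk Lb) u.
Proof. by move=> HL; rewrite qform_Lmat; apply: vsum_ge0 => j; have := HL (blk j); nra. Qed.

End BlockMatrices.

Definition incr_sum {T : finType} (u : nat -> T -> R) (s : seq nat) : T -> R :=
  fun j => \big[Rplus/0]_(e <- s) u e j.

Lemma vadd_incr_sum_cons {T : finType} (u : nat -> T -> R) (e : nat) (s : seq nat) (y : T -> R) :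
  vadd y (incr_sum u (e :: s)) = vadd (vadd y (u e)) (incr_sum u s).
Proof. by apply: functional_extensionality => j; rewrite /vadd /incr_sum big_cons; ring. Qed.

Lemma vadd_incr_sum_nil {T : finType} (u : nat -> T -> R) (y : T -> R) :
  vadd y (incr_sum u [::]) = y.
Proof. by apply: functional_extensionality => j; rewrite /vadd /incr_sum big_nil; ring. Qed.

Lemma vnorm_incr_sum {T : finType} (u : nat -> T -> R) (s : seq nat) :
  vnorm (incr_sum u s) <= \big[Rplus/0]_(e <- s) vnorm (u e).
Proof.
elim: s => [|e s IH].
  rewrite big_nil vnorm_eq0; first lra.
  by rewrite /ip /vsum big1 // => j _; rewrite /incr_sum big_nil; ring.
rewrite big_cons (vnorm_ext _ (fun j => u e j + incr_sum u s j)) => [|j].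
  by have := vnorm_triangle (u e) (incr_sum u s); lra.
by rewrite /incr_sum big_cons.
Qed.

Section BlockSmoothness.
Context {T : finType} {m : nat} (blk : T -> 'I_m).
Variables (f : (T -> R) -> R) (gradf : (T -> R) -> T -> R) (Lb : 'I_m -> R) (Lr : R).
Hypothesis f_grad : is_gradient f gradf.
Hypothesis grad_block_lip : forall i (z y : T -> R),
  bnorm blk i (vsub (gradf (vadd z (Uop blk i y))) (gradf z)) <= Lb i * bnorm blk i y.
Hypothesis grad_lip : forall i (z y : T -> R),
  vnorm (vsub (gradf (vadd z (Uop blk i y))) (gradf z)) <= Lr * bnorm blk i y.

Lemma block_descent (i : 'I_m) (y u : T -> R) :
  block_supported blk i u -> f (vadd y u) <= f y + ip (gradf y) u + Lb i / 2 * ip u u.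
Proof.
move=> Hu; apply: descent_along => // s Hs.
have Hsu : block_supported blk i (vscale s u) by move=> j /Hu; rewrite /vscale => ->; ring.
have := grad_block_lip i y (vscale s u).
rewrite (Uop_supported _ _ _ Hsu) !bnorm_Uop (Uop_supported _ _ _ Hsu).
rewrite vnorm_scale Rabs_pos_eq; last lra.
rewrite -(ip_Uop_supported _ _ _ _ Hu) -vnorm_sqr.
have := cauchy_schwarz (Uop blk i (vsub (gradf (vadd y (vscale s u))) (gradf y))) u.
have := vnorm_ge0 u; nra.
Qed.

Lemma grad_lip_supported (i : 'I_m) (y v : T -> R) :
  block_supported blk i v -> vnorm (vsub (gradf (vadd y v)) (gradf y)) <= Lr * vnorm v.
Proof. by move=> Hv; have := grad_lip i y v; rewrite bnorm_Uop (Uop_supported _ _ _ Hv). Qed.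

(* The hypotheses do not force [0 <= Lr]; a negative [Lr] makes every vector vanish. *)
Lemma ip_self_eq0_of_Lr_neg (u : T -> R) : Lr < 0 -> ip u u = 0.
Proof.
move=> HLr; rewrite -(sum_ip_Uop blk) big1 // => i _.
have := grad_lip i u u; have := vnorm_ge0 (vsub (gradf (vadd u (Uop blk i u))) (gradf u)).
rewrite bnorm_Uop => H1 H2.
have Hn : vnorm (Uop blk i u) = 0 by have := vnorm_ge0 (Uop blk i u); nra.
rewrite (_ : ip (Uop blk i u) u = ip (Uop blk i u) (Uop blk i u)).
  by rewrite -vnorm_sqr Hn; ring.
by apply: vsum_ext => j; rewrite /Uop; case: ifP => _; ring.
Qed.

Section Increments.
Variables (u : nat -> T -> R) (bi : nat -> 'I_m).

Lemma grad_drift (s : seq nat) :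
  (forall e, e \in s -> block_supported blk (bi e) (u e)) ->
  forall y, vnorm (vsub (gradf (vadd y (incr_sum u s))) (gradf y)) <=
            Lr * \big[Rplus/0]_(e <- s) vnorm (u e).
Proof.
elim: s => [|e s IH] Hs y.
  rewrite vadd_incr_sum_nil big_nil vnorm_eq0; first lra.
  by rewrite /ip /vsum big1 // => j _; rewrite /vsub; ring.
rewrite vadd_incr_sum_cons big_cons; set y1 := vadd y (u e).
have := IH (fun e' He' => Hs e' (@mem_behead _ (e :: s) e' He')) y1.
have := grad_lip_supported _ y _ (Hs e (mem_head e s)); rewrite -/y1.
have := vnorm_triangle (vsub (gradf (vadd y1 (incr_sum u s))) (gradf y1))
                       (vsub (gradf y1) (gradf y)).
rewrite (vnorm_ext _ (vsub (gradf (vadd y1 (incr_sum u s))) (gradf y))) => [|j].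
  lra.
by rewrite /vsub; ring.
Qed.

Lemma f_drift (s : seq nat) :
  (forall e, e \in s -> block_supported blk (bi e) (u e)) ->
  forall y, f (vadd y (incr_sum u s)) - f y - ip (gradf y) (incr_sum u s) <=
    / 2 * \big[Rplus/0]_(e <- s) qform (Lmat blk Lb) (u e)
    + Lr / 2 * ((\big[Rplus/0]_(e <- s) vnorm (u e)) ^ 2 - \big[Rplus/0]_(e <- s) ip (u e) (u e)).
Proof.
elim: s => [|e s IH] Hs y.
  rewrite vadd_incr_sum_nil !big_nil (_ : ip _ _ = 0); first lra.
  by rewrite /ip /vsum big1 // => j _; rewrite /incr_sum big_nil; ring.
have He := Hs e (mem_head e s).
rewrite vadd_incr_sum_cons !big_cons; set y1 := vadd y (u e).
set N := \big[Rplus/0]_(e' <- s) vnorm (u e').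
have := IH (fun e' He' => Hs e' (@mem_behead _ (e :: s) e' He')) y1.
have HL := qform_Lmat_supported blk Lb _ _ He.
have := block_descent _ y _ He; rewrite -/y1.
have Hgrad := grad_lip_supported _ y _ He; rewrite -/y1 in Hgrad.
have HS := vnorm_incr_sum u s; rewrite -/N in HS.
have := cauchy_schwarz (vsub (gradf y1) (gradf y)) (incr_sum u s).
have : vnorm (vsub (gradf y1) (gradf y)) * vnorm (incr_sum u s) <= Lr * vnorm (u e) * N.
  by apply: Rmult_le_compat => //; apply: vnorm_ge0.
rewrite ip_subl (_ : ip (gradf y) (incr_sum u (e :: s)) =
                     ip (gradf y) (u e) + ip (gradf y) (incr_sum u s)).
  move=> H1 H2 H3 H4; rewrite -/N in H4; have := vnorm_sqr (u e); nra.
by rewrite -ip_addr; apply: vsum_ext => j; rewrite /incr_sum big_cons.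
Qed.

End Increments.
End BlockSmoothness.

Section DelayedGradient.
Context {T : finType} {m : nat} (blk : T -> 'I_m).
Variables (f : (T -> R) -> R) (gradf : (T -> R) -> T -> R) (Lb : 'I_m -> R) (Lr : R).
Hypothesis f_conv : convex_fun f.
Hypothesis f_grad : is_gradient f gradf.
Hypothesis Lb_ge0 : forall i, 0 <= Lb i.
Hypothesis grad_block_lip : forall i (z y : T -> R),
  bnorm blk i (vsub (gradf (vadd z (Uop blk i y))) (gradf z)) <= Lb i * bnorm blk i y.
Hypothesis grad_lip : forall i (z y : T -> R),
  vnorm (vsub (gradf (vadd z (Uop blk i y))) (gradf z)) <= Lr * bnorm blk i y.

Variables (xs : nat -> T -> R) (idx : nat -> 'I_m) (tau k : nat).
Hypothesis steps_supported :
  forall d, (d < k)%nat -> block_supported blk (idx d) (vsub (xs d.+1) (xs d)).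

Let step d := vsub (xs d.+1) (xs d).
Let Sd := \big[Rplus/0]_(k - tau <= d < k) ip (step d) (step d).
Let SLd := \big[Rplus/0]_(k - tau <= d < k) qform (Lmat blk Lb) (step d).

Lemma delay_decomposition (hat : T -> R) :
  bounded_delay tau xs hat k ->
  exists s : seq nat,
    [/\ vadd hat (incr_sum step s) = xs k,
        forall e, e \in s -> block_supported blk (idx e) (step e),
        (\big[Rplus/0]_(e <- s) vnorm (step e)) ^ 2 <= INR tau * Sd &
        forall F : nat -> R, (forall e, 0 <= F e) ->
          \big[Rplus/0]_(e <- s) F e <= \big[Rplus/0]_(k - tau <= d < k) F d].
Proof.
move=> [J HJ]; set s := [seq e <- index_iota (k - tau) k | J e].
have Hdom F : (forall e, 0 <= F e) ->
    \big[Rplus/0]_(e <- s) F e <= \big[Rplus/0]_(k - tau <= d < k) F d.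
  by move=> HF; rewrite big_filter; apply: bigR_filter_le.
exists s; split => //.
- apply: functional_extensionality => j; rewrite /vadd HJ /incr_sum big_filter.
  by rewrite Rplus_assoc -big_split big1 => [|e _] /=; rewrite /step /vsub; ring.
- move=> e; rewrite mem_filter mem_index_iota => /and3P [_ _ He].
  exact: steps_supported.
- have := bigR_sqr_le_size _ s (fun e => vnorm (step e)).
  rewrite [X in INR _ * X](eq_bigr (fun e => ip (step e) (step e))) => [|e _];
    last exact: vnorm_sqr.
  have Hsize : INR (size s) <= INR tau.
    apply: le_INR; apply/leP; rewrite size_filter (leq_trans (count_size _ _)) //.
    by rewrite size_iota leq_subLR addnC -leq_subLR.
  have HSs := Hdom _ (fun e => ip_ge0 (step e)).
  have HSs0 : 0 <= \big[Rplus/0]_(e <- s) ip (step e) (step e).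
    by apply: bigR_ge0 => e _; apply: ip_ge0.
  have := Rmult_le_compat_r _ _ _ HSs0 Hsize.
  have := Rmult_le_compat_l _ _ _ (pos_INR tau) HSs.
  rewrite -/Sd; lra.
Qed.

Lemma delayed_gradient_gap (hat : T -> R) :
  bounded_delay tau xs hat k ->
  ip (vsub (gradf (xs k)) (gradf hat)) (vsub (gradf (xs k)) (gradf hat)) <= Lr ^ 2 * INR tau * Sd.
Proof.
move=> /delay_decomposition [s [Hxk Hs HN _]].
have := grad_drift blk gradf Lr grad_lip step idx s Hs hat; rewrite Hxk => Hg.
rewrite -vnorm_sqr; have := vnorm_ge0 (vsub (gradf (xs k)) (gradf hat)).
have : 0 <= \big[Rplus/0]_(e <- s) vnorm (step e) by apply: bigR_ge0 => e _; apply: vnorm_ge0.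
nra.
Qed.

Lemma delayed_value_gap (hat : T -> R) :
  bounded_delay tau xs hat k ->
  f (xs k) - f hat - ip (gradf hat) (vsub (xs k) hat) <= Lr * INR tau * Sd + / 2 * SLd.
Proof.
move=> /delay_decomposition [s [Hxk Hs HN Hdom]].
have := f_drift blk f gradf Lb Lr f_grad grad_block_lip grad_lip step idx s Hs hat.
rewrite Hxk (ip_ext _ (gradf hat) _ (incr_sum step s)) // => [|j]; last first.
  by rewrite -Hxk /vadd /vsub; ring.
have HSL : \big[Rplus/0]_(e <- s) qform (Lmat blk Lb) (step e) <= SLd.
  by apply: Hdom => e; apply: qform_Lmat_ge0.
have HSs : \big[Rplus/0]_(e <- s) ip (step e) (step e) <= Sd by apply: Hdom => e; apply: ip_ge0.
have HSs0 : 0 <= \big[Rplus/0]_(e <- s) ip (step e) (step e).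
  by apply: bigR_ge0 => e _; apply: ip_ge0.
suff : Lr / 2 * ((\big[Rplus/0]_(e <- s) vnorm (step e)) ^ 2 -
                 \big[Rplus/0]_(e <- s) ip (step e) (step e)) <= Lr * INR tau * Sd by lra.
case: (Rle_lt_dec 0 Lr) => HLr; first nra.
have Z := ip_self_eq0_of_Lr_neg blk gradf Lr grad_lip _ HLr.
rewrite /Sd !big1 => [|e _|e _|e _]; try exact: Z.
- by rewrite /= Rmult_0_l Rmult_0_r Rminus_0_r Rmult_0_r; lra.
- by rewrite /vnorm Z sqrt_0.
Qed.

Lemma delayed_gradient_bound (hat x : T -> R) (c : R) :
  0 < c -> bounded_delay tau xs hat k ->
  / (2 * c) * ip (vsub (gradf (xs k)) (gradf hat)) (vsub (gradf (xs k)) (gradf hat))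
    - ip (gradf hat) (vsub (xs k) x)
  <= f x - f (xs k) + (Lr ^ 2 * INR tau / c + 2 * Lr * INR tau) / 2 * Sd + / 2 * SLd.
Proof.
move=> Hc Hdelay.
have Hgrad := delayed_gradient_gap hat Hdelay.
have Hval := delayed_value_gap hat Hdelay.
have Hcvx := convex_gradient_le f gradf f_grad hat x f_conv.
have -> : ip (gradf hat) (vsub (xs k) x) =
          ip (gradf hat) (vsub (xs k) hat) - ip (gradf hat) (vsub x hat).
  by rewrite !(ip_sym (gradf hat)) -ip_subl; apply: vsum_ext => j; rewrite /vsub; ring.
have : / (2 * c) * ip (vsub (gradf (xs k)) (gradf hat)) (vsub (gradf (xs k)) (gradf hat))
       <= Lr ^ 2 * INR tau / c / 2 * Sd.
  have -> : Lr ^ 2 * INR tau / c / 2 * Sd = / (2 * c) * (Lr ^ 2 * INR tau * Sd) by field; lra.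
  by apply: Rmult_le_compat_l => //; apply: Rlt_le; apply: Rinv_0_lt_compat; lra.
lra.
Qed.

End DelayedGradient.

Definition Atmul {T : finType} {q : nat} (A : 'I_q -> T -> R) (mu : 'I_q -> R) : T -> R :=
  fun j => vsum (fun l => A l j * mu l).

Lemma ip_Atmul {T : finType} {q : nat} (A : 'I_q -> T -> R) (mu : 'I_q -> R) (v : T -> R) :
  ip (Atmul A mu) v = ip mu (Amul A v).
Proof.
rewrite /ip /Atmul /Amul (vsum_ext _ (fun j => vsum (fun l => mu l * (A l j * v j)))) => [|j].
  by rewrite vsum_exchange; apply: vsum_ext => l; rewrite vsum_scal.
by rewrite Rmult_comm -vsum_scal; apply: vsum_ext => l; ring.
Qed.

Lemma dual_update_identity {q : nat} (beta rho : R) (lam r a r1 : 'I_q -> R) :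
  r1 = (fun l => r l + a l) ->
  - ip (lam_next rho lam r1) r1 + (beta - rho) * ip r1 r1 - beta / 2 * ip r1 r1
    - beta / 2 * ip a a =
  - ip lam r + beta / 2 * ip r r - ip (fun l => lam l - beta * r l) a.
Proof.
move=> Hr1.
have -> : ip (lam_next rho lam r1) r1 = ip lam r + ip lam a - rho * ip r1 r1.
  by rewrite /ip -vsum_scal -vsum_add -vsum_sub; apply: vsum_ext => l; rewrite /lam_next Hr1; ring.
rewrite Hr1 ip_sqr_add.
have -> : ip (fun l => lam l - beta * r l) a = ip lam a - beta * ip r a.
  by rewrite /ip -vsum_scal -vsum_sub; apply: vsum_ext => l; ring.
field.
Qed.

Section BlockUpdate.
Context {T : finType} {m q : nat} (blk : T -> 'I_m).
Variables (f : (T -> R) -> R) (gradf : (T -> R) -> T -> R)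
  (g : forall i : 'I_m, (Blk blk i -> R) -> ereal)
  (A : 'I_q -> T -> R) (Pb : 'I_m -> T -> T -> R) (beta : R).
Hypothesis Pb_sym : forall i j j', blk j = i -> blk j' = i -> Pb i j j' = Pb i j' j.

Lemma Fval_block_update (i : 'I_m) (z y : T -> R) :
  (forall j, blk j != i -> z j = y j) ->
  Fval blk f g z - Fval blk f g y =
  f z - f y + efin_val (g i (restr blk i z)) - efin_val (g i (restr blk i y)).
Proof.
move=> Hzy; rewrite /Fval (bigD1 i) //= [X in _ - (_ + X)](bigD1 i) //=.
rewrite (eq_bigr (fun i' => efin_val (g i' (restr blk i' y)))) => [|i' Hi']; first ring.
suff -> : restr blk i' z = restr blk i' y by [].
apply: functional_extensionality => -[j Hj]; rewrite /restr /= Hzy //.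
by rewrite (eqP Hj).
Qed.

Lemma r_next_supported (i : 'I_m) (xk z : T -> R) (r : 'I_q -> R) :
  block_supported blk i (vsub z xk) ->
  r_next blk A i xk z r = fun l => r l + Amul A (vsub z xk) l.
Proof.
move=> HD; apply: functional_extensionality => l; rewrite /r_next /Amul /=.
rewrite (vsum_supported blk i) => [|j Hj]; last by rewrite HD //; ring.
by congr (_ + _); apply: bsum_ext.
Qed.

Lemma prox_block_optimality (i : 'I_m) (xk hat : T -> R) (lam r : 'I_q -> R) (z x : T -> R) :
  convex_efun (g i) -> x_step blk gradf g A Pb beta i xk hat lam r z ->
  g i (restr blk i x) <> EInf ->
  efin_val (g i (restr blk i z)) - efin_val (g i (restr blk i x)) <=
  ip (Uop blk i (vsub (gradf hat) (Atmul A (fun l => lam l - beta * r l)))) (vsub x z)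
  + bil (Pfull blk Pb) (vsub z xk) (vsub x z).
Proof.
move=> g_conv [Hkeep Hmin] Hx.
case Hgx : (g i (restr blk i x)) => [gx|] //.
have [gz [-> Hopt]] := prox_step_optimality _ _ _ _ _ _ _
  (fun s s' : Blk blk i => Pb_sym i _ _ (eqP (proj2_sig s)) (eqP (proj2_sig s'))) g_conv Hgx Hmin.
rewrite /= -ip_restr (bil_Pfull_supported blk Pb i) => [|j Hj]; first exact: Hopt.
by rewrite /vsub Hkeep //; ring.
Qed.

Variables (Lb : 'I_m -> R) (rho : R).
Hypothesis f_grad : is_gradient f gradf.
Hypothesis grad_block_lip : forall i (z y : T -> R),
  bnorm blk i (vsub (gradf (vadd z (Uop blk i y))) (gradf z)) <= Lb i * bnorm blk i y.

(* The part of the per-block estimate that is only controlled after summing over [i]. *)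
Definition block_slack (c : R) (i : 'I_m) (xk hat : T -> R) (lam r : 'I_q -> R) (x : T -> R) : R :=
  / (2 * c) * ip (Uop blk i (vsub (gradf xk) (gradf hat))) (vsub (gradf xk) (gradf hat))
  + efin_val (g i (restr blk i x)) - efin_val (g i (restr blk i xk))
  - ip (Uop blk i (vsub (gradf hat) (Atmul A (fun l => lam l - beta * r l)))) (vsub xk x).

Lemma block_step_bound (c : R) (i : 'I_m) (xk hat : T -> R) (lam r : 'I_q -> R) (z x : T -> R) :
  0 < c -> convex_efun (g i) -> x_step blk gradf g A Pb beta i xk hat lam r z ->
  g i (restr blk i x) <> EInf ->
  let r1 := r_next blk A i xk z r in
  let lam1 := lam_next rho lam r1 in
  let P := Pfull blk Pb in
  let M := fun j j' => P j j' - Lmat blk Lb j j' - c * Imat j j' - beta * AtA A j j' in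
  Fval blk f g z - Fval blk f g x - ip lam1 r1 + (beta - rho) * ip r1 r1
    - beta / 2 * ip r1 r1 + / 2 * qform P (vsub z x) + / 2 * qform M (vsub z xk)
  <= (Fval blk f g xk - Fval blk f g x - ip lam r + beta * ip r r) - beta / 2 * ip r r
     + / 2 * qform P (vsub xk x) + block_slack c i xk hat lam r x.
Proof.
move=> Hc g_conv Hstep Hx r1 lam1 P M.
set D := vsub z xk; set e := vsub xk x.
have HD : block_supported blk i D by move=> j Hj; rewrite /D /vsub (proj1 Hstep j Hj); ring.
have HF := Fval_block_update i z xk (proj1 Hstep).
have Hdesc : f z <= f xk + ip (gradf xk) D + Lb i / 2 * ip D D.
  have := block_descent blk f gradf Lb f_grad grad_block_lip i xk D HD.
  rewrite (_ : vadd xk D = z) //.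
  by apply: functional_extensionality => j; rewrite /vadd /D /vsub; ring.
have Hopt := prox_block_optimality i xk hat lam r z x g_conv Hstep Hx.
have Exz : vsub x z = fun j => (-1) * (e j + D j).
  by apply: functional_extensionality => j; rewrite /e /D /vsub; ring.
rewrite Exz ip_scalr ip_addr bil_scalr bil_addr (ip_Uop_supported _ _ _ _ HD) in Hopt.
rewrite ip_subl ip_Atmul in Hopt.
have Hdual := dual_update_identity beta rho lam r _ _ (r_next_supported i xk z r HD).
have HP : qform P (vsub z x) = qform P e + 2 * bil P D e + qform P D.
  rewrite (qform_ext _ _ (fun j => e j + D j)) => [|j]; last by rewrite /e /D /vsub; ring.
  by rewrite qform_add (bil_sym _ _ _ (Pfull_sym blk Pb Pb_sym)) -/P; field.
have HM : qform M D = qform P D - Lb i * ip D D - c * ip D D - beta * ip (Amul A D) (Amul A D).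
  rewrite /M !qform_sub_mat !qform_scale_mat qform_Imat qform_AtA.
  by rewrite (qform_Lmat_supported blk Lb i D HD).
have Hyoung := ip_supported_young blk i c (vsub (gradf xk) (gradf hat)) _ Hc HD.
rewrite ip_subl in Hyoung.
rewrite /block_slack -/e; rewrite -/D -/e in HF; rewrite -/r1 -/lam1 -/D in Hdual.
rewrite -/P -/D in Hopt; change (qform P D) with (bil P D D) in HP, HM.
(* [lra] compares atoms syntactically: give both spellings of [lam - beta r] one name. *)
set mu := fun l : 'I_q => lam l - beta * r l in Hdual Hopt *.
lra.
Qed.
End BlockUpdate.

Lemma sum_block_slack {T : finType} {m q : nat} (blk : T -> 'I_m)
    (gradf : (T -> R) -> T -> R) (g : forall i : 'I_m, (Blk blk i -> R) -> ereal)
    (A : 'I_q -> T -> R) (beta c : R) (xk hat : T -> R) (lam r : 'I_q -> R) (x : T -> R) :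
  \big[Rplus/0]_(i < m) block_slack blk gradf g A beta c i xk hat lam r x =
  / (2 * c) * ip (vsub (gradf xk) (gradf hat)) (vsub (gradf xk) (gradf hat))
  + \big[Rplus/0]_(i < m) efin_val (g i (restr blk i x))
  - \big[Rplus/0]_(i < m) efin_val (g i (restr blk i xk))
  - ip (gradf hat) (vsub xk x) + ip (fun l => lam l - beta * r l) (Amul A (vsub xk x)).
Proof.
rewrite /block_slack !bigR_sub big_split /= bigR_scal !sum_ip_Uop (ip_subl (gradf hat)) ip_Atmul.
lra.
Qed.

Lemma sum_block_slack_le {T : finType} {m q : nat} (blk : T -> 'I_m)
    (f : (T -> R) -> R) (gradf : (T -> R) -> T -> R)
    (g : forall i : 'I_m, (Blk blk i -> R) -> ereal) (A : 'I_q -> T -> R)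
    (Lb : 'I_m -> R) (Lr beta c : R) (xs : nat -> T -> R) (idx : nat -> 'I_m) (tau k : nat)
    (hat x : T -> R) (lam r : 'I_q -> R) :
  convex_fun f -> is_gradient f gradf -> (forall i, 0 <= Lb i) ->
  (forall i (z y : T -> R),
      bnorm blk i (vsub (gradf (vadd z (Uop blk i y))) (gradf z)) <= Lb i * bnorm blk i y) ->
  (forall i (z y : T -> R),
      vnorm (vsub (gradf (vadd z (Uop blk i y))) (gradf z)) <= Lr * bnorm blk i y) ->
  (forall d, (d < k)%nat -> block_supported blk (idx d) (vsub (xs d.+1) (xs d))) ->
  0 < c -> bounded_delay tau xs hat k -> (forall l, r l = Amul A (vsub (xs k) x) l) ->
  \big[Rplus/0]_(i < m) block_slack blk gradf g A beta c i (xs k) hat lam r x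
  <= - (Fval blk f g (xs k) - Fval blk f g x - ip lam r + beta * ip r r)
     + (Lr ^ 2 * INR tau / c + 2 * Lr * INR tau) / 2
       * \big[Rplus/0]_(k - tau <= d < k) ip (vsub (xs d.+1) (xs d)) (vsub (xs d.+1) (xs d))
     + / 2 * \big[Rplus/0]_(k - tau <= d < k) qform (Lmat blk Lb) (vsub (xs d.+1) (xs d)).
Proof.
move=> f_conv f_grad Lb_ge0 grad_block_lip grad_lip Hsteps Hc Hdelay Hres.
have := delayed_gradient_bound blk f gradf Lb Lr f_conv f_grad Lb_ge0 grad_block_lip grad_lip
  xs idx tau k Hsteps hat x c Hc Hdelay.
rewrite sum_block_slack.
have -> : ip (fun l => lam l - beta * r l) (Amul A (vsub (xs k) x)) = ip lam r - beta * ip r r.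
  by rewrite /ip -vsum_scal -vsum_sub; apply: vsum_ext => l; rewrite Hres; ring.
rewrite /Fval; lra.
Qed.

Lemma Amul_sub {T : finType} {q : nat} (A : 'I_q -> T -> R) (u v : T -> R) (l : 'I_q) :
  Amul A (vsub u v) l = Amul A u l - Amul A v l.
Proof. by rewrite /Amul -vsum_sub; apply: vsum_ext => j; rewrite /vsub; ring. Qed.

Lemma residual_invariant {T : finType} {m q : nat} (blk : T -> 'I_m) (A : 'I_q -> T -> R)
    (b : 'I_q -> R) (xs : nat -> T -> R) (rs : nat -> 'I_q -> R) (idx : nat -> 'I_m) (k : nat) :
  (forall l, rs O l = Amul A (xs O) l - b l) ->
  (forall d, (d < k)%nat ->
     block_supported blk (idx d) (vsub (xs d.+1) (xs d)) /\
     forall l, rs d.+1 l = r_next blk A (idx d) (xs d) (xs d.+1) (rs d) l) ->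
  forall l, rs k l = Amul A (xs k) l - b l.
Proof.
move=> H0 Hsteps; suff : forall d, (d <= k)%nat -> forall l, rs d l = Amul A (xs d) l - b l.
  by apply.
elim=> [|d IH] Hd l; first exact: H0.
have [Hsupp Hr] := Hsteps d Hd.
rewrite Hr (r_next_supported blk A _ _ _ _ Hsupp) IH ?(ltnW Hd) //.
by rewrite Amul_sub; ring.
Qed.

Lemma le_Lc {m : nat} (Lb : 'I_m -> R) (i : 'I_m) : Lb i <= Lc Lb.
Proof.
rewrite /Lc; have : i \in index_enum 'I_m by apply: mem_index_enum.
elim: (index_enum 'I_m) => [|a s IH] //=.
rewrite in_cons big_cons => /orP [/eqP ->|Hi]; first exact: Rmax_l.
exact: Rle_trans (IH Hi) (Rmax_r _ _).
Qed.

Lemma expectation_bound {m : nat} (F1 F2 X : 'I_m -> R) (Z w1 w2 C Sd SLd : R) :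
  (0 < m)%nat ->
  (forall i, F1 i + / 2 * F2 i <= Z - w1 + w2 + X i) ->
  \big[Rplus/0]_(i < m) X i <= - Z + C / 2 * Sd + / 2 * SLd ->
  / INR m * \big[Rplus/0]_(i < m) F1 i + / 2 * (/ INR m * \big[Rplus/0]_(i < m) F2 i)
    - C / (2 * INR m) * Sd - / (2 * INR m) * SLd
  <= (1 - / INR m) * Z - w1 + w2.
Proof.
move=> Hm HF HX; have Hm' : 0 < INR m by apply: lt_0_INR; apply/ltP.
have := bigR_le _ (index_enum 'I_m) xpredT _ _ (fun i _ => HF i).
rewrite big_split /= bigR_scal [X in _ <= X]big_split /= bigR_const_ord.
set S1 := \big[Rplus/0]_(i < m) F1 i; set S2 := \big[Rplus/0]_(i < m) F2 i.
set SX := \big[Rplus/0]_(i < m) X i in HX * => Hsum.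
apply: (Rmult_le_reg_l (INR m)) => //.
have -> : INR m * (/ INR m * S1 + / 2 * (/ INR m * S2) - C / (2 * INR m) * Sd
                   - / (2 * INR m) * SLd) = S1 + / 2 * S2 - C / 2 * Sd - / 2 * SLd.
  by field; lra.
have -> : INR m * ((1 - / INR m) * Z - w1 + w2) = INR m * (Z - w1 + w2) - Z by field; lra.
lra.
Qed.

Theorem mainTheorem10
  (T : finType) (m q : nat) (blk : T -> 'I_m)
  (f : (T -> R) -> R) (gradf : (T -> R) -> T -> R)
  (g : forall i : 'I_m, (Blk blk i -> R) -> ereal)
  (A : 'I_q -> T -> R) (b : 'I_q -> R)
  (Lb : 'I_m -> R) (Lr : R) (Pb : 'I_m -> T -> T -> R)
  (beta rho alpha : R) (tau k : nat)
  (* one realization of the history: x^d, r^d, lambda^d, xhat^d, i_d *)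
  (xs : nat -> T -> R) (rs lams : nat -> 'I_q -> R) (hats : nat -> T -> R)
  (idx : nat -> 'I_m)
  (* xnew i = x^{k+1} in the event i_k = i *)
  (xnew : 'I_m -> T -> R)
  (x : T -> R) :
  (0 < m)%nat ->
  convex_fun f -> is_gradient f gradf -> continuous_map gradf ->
  (forall i, proper_efun (g i) /\ convex_efun (g i) /\ lsc_efun (g i)) ->
  (forall i, 0 < Lb i) ->
  (forall i (z y : T -> R),
      bnorm blk i (vsub (gradf (vadd z (Uop blk i y))) (gradf z)) <= Lb i * bnorm blk i y) ->
  (forall i (z y : T -> R),
      vnorm (vsub (gradf (vadd z (Uop blk i y))) (gradf z)) <= Lr * bnorm blk i y) ->
  0 < beta -> 0 < rho ->
  (forall i j j', blk j = i -> blk j' = i -> Pb i j j' = Pb i j' j) ->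
  (forall i (w : Blk blk i -> R),
      0 <= qform (fun s s' : Blk blk i => Pb i (proj1_sig s) (proj1_sig s')) w) ->
  (forall l, lams O l = 0) ->
  (forall l, rs O l = Amul A (xs O) l - b l) ->
  (forall i, g i (restr blk i (xs O)) <> EInf) ->
  (forall d, (d < k)%nat ->
      x_step blk gradf g A Pb beta (idx d) (xs d) (hats d) (lams d) (rs d) (xs (S d)) /\
      (forall l, rs (S d) l = r_next blk A (idx d) (xs d) (xs (S d)) (rs d) l) /\
      (forall l, lams (S d) l = lam_next rho (lams d) (rs (S d)) l)) ->
  (forall d, (d <= k)%nat -> bounded_delay tau xs (hats d) d) ->
  (forall i, x_step blk gradf g A Pb beta i (xs k) (hats k) (lams k) (rs k) (xnew i)) ->
  0 < alpha ->
  (forall l, Amul A x l = b l) ->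
  (forall i, g i (restr blk i x) <> EInf) ->
  let r1 := fun i : 'I_m => r_next blk A i (xs k) (xnew i) (rs k) in
  let lam1 := fun i : 'I_m => lam_next rho (lams k) (r1 i) in
  let E := fun h : 'I_m -> R => / INR m * \big[Rplus/0]_(i < m) h i in
  let P := Pfull blk Pb in
  let L := Lmat blk Lb in
  let M := fun j j' : T =>
      P j j' - L j j' - alpha * Lc Lb * Imat j j' - beta * AtA A j j' in
  let kappa := Lr / Lc Lb in
  E (fun i => Fval blk f g (xnew i) - Fval blk f g x - ip (lam1 i) (r1 i)
              + (beta - rho) * ip (r1 i) (r1 i) - beta / 2 * ip (r1 i) (r1 i)
              + / 2 * qform P (vsub (xnew i) x))
  + / 2 * E (fun i => qform M (vsub (xnew i) (xs k)))
  - (kappa * Lr * INR tau / alpha + 2 * Lr * INR tau) / (2 * INR m)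
      * \big[Rplus/0]_(k - tau <= d < k) ip (vsub (xs (S d)) (xs d)) (vsub (xs (S d)) (xs d))
  - / (2 * INR m)
      * \big[Rplus/0]_(k - tau <= d < k) qform L (vsub (xs (S d)) (xs d))
  <= (1 - / INR m) * (Fval blk f g (xs k) - Fval blk f g x - ip (lams k) (rs k)
                      + beta * ip (rs k) (rs k))
     - beta / 2 * ip (rs k) (rs k) + / 2 * qform P (vsub (xs k) x).
Proof.
(* Not needed for this one-step estimate: positivity of [beta] and [rho],
   semidefiniteness of the [P_i], continuity of [gradf], [lams O = 0] and
   [xs O] lying in the domain of [g]. *)
move=> Hm f_conv f_grad _ Hg Lb_pos grad_block_lip grad_lip _ _ Pb_sym _ _ Hr0 _ Hiter Hdelay
  Hnew alpha_pos Hx_feas Hx_dom r1 lam1 E P L M kappa.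
have Hsteps : forall d, (d < k)%nat -> block_supported blk (idx d) (vsub (xs d.+1) (xs d)).
  by move=> d Hd j Hj; rewrite /vsub (proj1 (proj1 (Hiter d Hd)) j Hj); ring.
have Hres : forall l, rs k l = Amul A (vsub (xs k) x) l.
  move=> l; rewrite Amul_sub Hx_feas.
  apply: (residual_invariant blk A b xs rs idx k Hr0) => d Hd.
  by split; [apply: Hsteps | apply: (proj1 (proj2 (Hiter d Hd)))].
have HLc : 0 < Lc Lb.
  by have := le_Lc Lb (Ordinal Hm); have := Lb_pos (Ordinal Hm); lra.
set c := alpha * Lc Lb.
have Hc : 0 < c by apply: Rmult_lt_0_compat.
have Hblock i := block_step_bound blk f gradf g A Pb beta Pb_sym Lb rho f_grad grad_block_lip
  c i (xs k) (hats k) (lams k) (rs k) (xnew i) x Hc (proj1 (proj2 (Hg i))) (Hnew i) (Hx_dom i).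
have Hsum := sum_block_slack_le blk f gradf g A Lb Lr beta c xs idx tau k (hats k) x (lams k) (rs k)
  f_conv f_grad (fun i => Rlt_le _ _ (Lb_pos i)) grad_block_lip grad_lip Hsteps Hc
  (Hdelay k (leqnn k)) Hres.
have -> : kappa * Lr * INR tau / alpha = Lr ^ 2 * INR tau / c by rewrite /kappa /c; field; lra.
rewrite /E; apply: (expectation_bound _ _ _ _ _ _ _ _ _ Hm _ Hsum) => i.
exact: Hblock i.
Qed.
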